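(* Let $f:\mathbb{R}^n\times\mathbb{R}\to\mathbb{R}^n$ be $C^1$, let $\lambda_-<\lambda_+$, let $\Lambda:\mathbb{R}\to(\lambda_-,\lambda_+)$ be a parameter shift from $\lambda_-$ to $\lambda_+$, and let $r>0$. Let $\Phi(t,s,x_0)$ denote the solution cocycle of $\dot x=f(x,\Lambda(rt))$, and let $\phi_\pm$ denote the flow of the autonomous system $\dot x=f(x,\lambda_\pm)$. Let $\mathcal{A}=\{A_t\}_{t\in\mathbb{R}}$ be a nonautonomous set that is invariant, i.e. $\Phi(t,s,A_s)=A_t$ for all $t,s\in\mathbb{R}$. If the upper backward limit $A_{-\infty}$ (respectively the upper forward limit $A_{+\infty}$) is bounded, then $$\phi_-(s,A_{-\infty})=A_{-\infty}\quad(\text{respectively } \phi_+(s,A_{+\infty})=A_{+\infty})$$ for all $s\in\mathbb{R}$.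
   Context: A parameter shift from $\lambda_-$ to $\lambda_+$ is a smooth function $\Lambda:\mathbb{R}\to(\lambda_-,\lambda_+)$ with $\lim_{\tau\to\pm\infty}\Lambda(\tau)=\lambda_\pm$ and $\lim_{\tau\to\pm\infty}\frac{d\Lambda}{d\tau}(\tau)=0$. Solutions of $\dot x=f(x,\Lambda(rt))$ are assumed to exist for all time; $\Phi(t,s,x_0)$ denotes the value at time $t$ of the solution with $x(s)=x_0$. A nonautonomous set is a family $\mathcal{A}=\{A_t\}_{t\in\mathbb{R}}$ of nonempty subsets $A_t\subset\mathbb{R}^n$ (the fibres). Its upper forward and backward limits are $A_{+\infty}=\bigcap_{\tau>0}\overline{\bigcup_{t\ge\tau}A_t}$ and $A_{-\infty}=\bigcap_{\tau>0}\overline{\bigcup_{t\le-\tau}A_t}$. *)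

From HB Require Import structures.
From mathcomp Require Import all_boot all_order all_algebra.
From mathcomp Require Import all_classical all_reals all_analysis.
Set Implicit Arguments. Unset Strict Implicit. Unset Printing Implicit Defensive.
Import Order.TTheory GRing.Theory Num.Theory.
Import numFieldNormedType.Exports.
Local Open Scope classical_set_scope.
Local Open Scope ring_scope.

Definition C1_field (R : realType) (n : nat)
    (f : 'rV[R]_n * R -> 'rV[R]_n) : Prop :=
  (forall z, differentiable f z) /\ (forall v, continuous ('D_v f)).

Definition smooth_fun (R : realType) (g : R -> R) : Prop :=
  forall k x, derivable (iter k (@derive1 R R) g) x 1.

Definition parameter_shift (R : realType) (Lam : R -> R) (lm lp : R) : Prop :=
  smooth_fun Lam /\
  (forall t, lm < Lam t < lp) /\
  (Lam t @[t --> -oo] --> lm) /\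
  (Lam t @[t --> +oo] --> lp) /\
  (derive1 Lam t @[t --> -oo] --> 0) /\
  (derive1 Lam t @[t --> +oo] --> 0).

Definition is_solution (R : realType) (n : nat)
    (g : R -> 'rV[R]_n -> 'rV[R]_n) (x : R -> 'rV[R]_n) : Prop :=
  forall t, derivable x t 1 /\ derive1 x t = g t (x t).

Definition solution_cocycle (R : realType) (n : nat)
    (f : 'rV[R]_n * R -> 'rV[R]_n) (Lam : R -> R) (r : R)
    (Phi : R -> R -> 'rV[R]_n -> 'rV[R]_n) : Prop :=
  forall s x0, Phi s s x0 = x0 /\
    is_solution (fun t x => f (x, Lam (r * t))) (fun t => Phi t s x0).

Definition autonomous_flow (R : realType) (n : nat)
    (f : 'rV[R]_n * R -> 'rV[R]_n) (lam : R)
    (phi : R -> 'rV[R]_n -> 'rV[R]_n) : Prop :=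
  forall x0, phi 0 x0 = x0 /\
    is_solution (fun _ x => f (x, lam)) (fun t => phi t x0).

Definition nonautonomous_set (R : realType) (n : nat)
    (A : R -> set 'rV[R]_n) : Prop := forall t, A t !=set0.

Definition invariant_set (R : realType) (n : nat)
    (Phi : R -> R -> 'rV[R]_n -> 'rV[R]_n) (A : R -> set 'rV[R]_n) : Prop :=
  forall t s, Phi t s @` A s = A t.

Definition upper_forward_limit (R : realType) (n : nat)
    (A : R -> set 'rV[R]_n) : set 'rV[R]_n :=
  \bigcap_(tau in [set tau : R | 0 < tau])
     closure (\bigcup_(t in [set t : R | tau <= t]) A t).

Definition upper_backward_limit (R : realType) (n : nat)
    (A : R -> set 'rV[R]_n) : set 'rV[R]_n :=
  \bigcap_(tau in [set tau : R | 0 < tau])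
     closure (\bigcup_(t in [set t : R | t <= - tau]) A t).

Definition bounded_rv (R : realType) (n : nat) (S : set 'rV[R]_n) : Prop :=
  exists M : R, forall x, S x -> `|x| <= M.

From HB Require Import structures.
From mathcomp Require Import all_boot all_order all_algebra.
From mathcomp Require Import all_classical all_reals all_analysis.
From mathcomp Require Import ring lra.
Import Order.TTheory GRing.Theory Num.Theory.
Import numFieldNormedType.Exports.
Local Open Scope classical_set_scope.
Local Open Scope ring_scope.

(* Take x in the upper backward (resp. forward) limit and s in R.  There are
   points y of fibres A_t0 arbitrarily close to x with t0 arbitrarily far in
   the past (resp. future), and invariance puts Phi (t0 + s) t0 y in A_(t0+s).
   On the window between t0 and t0 + s the parameter Lam (r t) is uniformly
   close to its limit, so continuous dependence of solutions on initial data
   and parameters makes Phi (t0 + s) t0 y close to phi s x; hence phi s x lies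
   in the limit set.  Continuous dependence comes from Gronwall's inequality
   applied to the squared Euclidean distance of two solutions, using the local
   Lipschitz bound given by the C^1 hypothesis.  Equality follows from
   phi s (phi (- s) x) = x, itself a case of continuous dependence. *)

Section real_analysis.
Context {R : realType}.

Lemma derive1_val {W : normedModType R} {w : R -> W} {t : R} {dw : W} :
  is_derive t 1 w dw -> derive1 w t = dw.
Proof. by move=> [_ <-]; rewrite derive1E. Qed.

Lemma is_derive1_comp_diff {U W : normedModType R} {g : U -> W} {gam : R -> U}
    {t : R} {dgam : U} :
  is_derive t 1 gam dgam -> differentiable g (gam t) ->
  is_derive t 1 (g \o gam) ('d g (gam t) dgam).
Proof.
move=> [/derivable1_diffP dgamt <-] dg.
have dcomp : differentiable (g \o gam) t by exact: differentiable_comp.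
apply: DeriveDef; first exact/derivable1_diffP.
by rewrite -derive1E derive1E' // diff_comp //= -derive1E' // derive1E.
Qed.

Lemma is_derive_line {U W : normedModType R} (g : U -> W) (a w : U) (t : R) :
  differentiable g (a + t *: w) ->
  is_derive t 1 (fun s : R => g (a + s *: w)) ('d g (a + t *: w) w).
Proof.
move=> dg; apply: (is_derive1_comp_diff (gam := fun s : R => a + s *: w)) => //.
have dl : differentiable (fun s : R => a + s *: w) t by exact: differentiableD.
apply: DeriveDef; first exact/derivable1_diffP.
by rewrite -derive1E derive1E' // diffD // diff_cst /= add0r diff_val scale1r.
Qed.

Lemma is_derive1_comp_real {W : normedModType R} {w : R -> W} {g : R -> R}
    {t dg : R} :
  is_derive t 1 g dg -> derivable w (g t) 1 ->
  is_derive t 1 (w \o g) (dg *: derive1 w (g t)).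
Proof.
move=> dgt /derivable1_diffP dw.
rewrite derive1E' // -linearZ /= [_%:A]mulr1.
exact: is_derive1_comp_diff.
Qed.

Lemma gronwall (E : R -> R) (M c a b : R) : 0 < M -> a <= b ->
  (forall t, derivable E t 1) ->
  (forall t, a <= t <= b -> derive1 E t <= M * E t + c) ->
  E b + c / M <= (E a + c / M) * expR (M * (b - a)).
Proof.
move=> M0 ab dE hE.
pose W t := (E t + c / M) * expR (- M * t).
have dW (t : R) : is_derive t (1 : R) W ((derive1 E t - M * E t - c) * expR (- M * t)).
  have dEc : is_derive t 1 (fun t => E t + c / M) (derive1 E t).
    apply: DeriveDef; first exact: derivableD.
    by rewrite deriveD // derive_cst addr0 derive1E.
  have dlin : is_derive t 1 (fun t => - M * t) (- M).
    by have := is_deriveZ (- M) (is_derive_id t 1); rewrite /GRing.scale /= mulr1.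
  have := is_deriveM dEc (is_derive1_comp (is_derive_expR _) dlin).
  rewrite /GRing.scale /= => dW'.
  by apply: (is_derive_eq (dW' : is_derive t 1 W _)); field; rewrite gt_eqF.
have : W b <= W a.
  apply: (@ler0_derive1_nincr R W a b) => //.
  + move=> x /[!in_itv] /= /andP[ax xb].
    rewrite (derive1_val (dW x)) pmulr_lle0 ?expR_gt0 // subr_le0 lerBlDr addrC.
    by apply: hE; rewrite !ltW.
  + by apply: derivable_within_continuous => x _; case: (dW x).
rewrite /W -(ler_pM2r (expR_gt0 (M * b))) -!mulrA -!expRD.
by rewrite mulNr addNr expR0 mulr1; congr (_ <= _ * expR _); ring.
Qed.

Lemma continuous_barrier (E : R -> R) (s k : R) : continuous E -> E 0 < k ->
  (forall t, 0 <= t <= s -> (forall u, 0 <= u <= t -> E u <= k) -> E t < k) ->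
  forall t, 0 <= t <= s -> E t < k.
Proof.
(* At the first time m at which E reaches k, E is below k on [0, m), hence
   E <= k on [0, m] by continuity, and the hypothesis gives E m < k. *)
move=> cE E0k hE t ts; rewrite ltNge; apply/negP => kEt.
pose T := [set u | 0 <= u <= s /\ k <= E u].
have lbT : has_lbound T by exists 0 => u [/andP[]].
have T0 : T !=set0 by exists t.
have closedT : closed T.
  apply: closedI; first by have := @itv_closed _ R 0 s; rewrite set_itvE.
  exact: (preimage_closed (fun x _ => cE x) (@closed_ge R k)).
pose m := inf T.
have [/andP[m0 ms] kEm] : T m.
  apply: itv_closed_infimums => //; split; first exact: ge_inf.
  by move=> l; exact: lb_le_inf.
have below_m u : 0 <= u < m -> E u < k.
  move=> /andP[u0 um]; rewrite ltNge; apply/negP => kEu.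
  suff : m <= u by rewrite leNgt um.
  by apply: (ge_inf lbT); split; rewrite // u0 (ltW (lt_le_trans um ms)).
have Emk : E m <= k.
  case: (ler0P m) => [m_le0|m_gt0].
    by rewrite (_ : m = 0) ?(ltW E0k) //; apply/eqP; rewrite eq_le m_le0 m0.
  apply: (closed_cvg _ (@closed_le R k) _ _ (cvg_at_left_filter (cE m))).
  near=> x; apply/ltW/below_m; apply/andP; split; near: x.
    exact: nbhs_left_ge.
  exact: nbhs_left_lt.
have : E m < k.
  apply: hE; first by rewrite m0 ms.
  move=> u /andP[u0]; rewrite le_eqVlt => /orP[/eqP-> //|um].
  by apply/ltW/below_m; rewrite u0.
by rewrite ltNge kEm.
Unshelve. all: by end_near.
Qed.

Lemma cvg_scaled_eventually (g : R -> R) (l r sg : R) :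
  0 < r -> `|sg| = 1 -> g (sg * t) @[t --> +oo] --> l ->
  forall e, 0 < e -> exists T, forall t, T <= sg * t -> `|g (r * t) - l| < e.
Proof.
move=> r0 sg1 gl e e0.
have [M [_ HM]] := (cvgrPdist_lt _ _).1 gl e e0.
exists (M / r + 1) => t tT; rewrite distrC.
have sgsg : sg * sg = 1 by rewrite -expr2 -real_normK ?num_real // sg1 expr1n.
have -> : r * t = sg * (r * (sg * t)).
  by rewrite mulrCA [sg * (sg * t)]mulrA sgsg mul1r.
apply: HM; have : M / r < sg * t by lra.
by rewrite ltr_pdivrMr // mulrC.
Qed.

End real_analysis.

Section sum_of_squares.
Context {R : realType} {n : nat}.
Local Notation V := 'rV[R]_n.

Definition sumsq (v : V) : R := \sum_(i < n) v 0 i ^+ 2.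

Lemma coord_le_norm (v : V) i : `|v 0 i| <= `|v|.
Proof.
rewrite [leRHS]/Num.Def.normr /= mx_normrE.
exact: (le_bigmax _ _ (0, i)).
Qed.

Lemma rV_norm_le (v : V) c : 0 <= c -> (forall i, `|v 0 i| <= c) -> `|v| <= c.
Proof.
move=> c0 vc; rewrite [leLHS]/Num.Def.normr /= mx_normrE.
by apply: bigmax_le => // -[i j] _; rewrite (ord1 i).
Qed.

Lemma sumsq_ge0 (v : V) : 0 <= sumsq v.
Proof. by apply: sumr_ge0 => i _; rewrite sqr_ge0. Qed.

Lemma sqr_norm_le_sumsq (v : V) : `|v| ^+ 2 <= sumsq v.
Proof.
have : `|v| <= Num.sqrt (sumsq v).
  apply: rV_norm_le => [|i]; first exact: sqrtr_ge0.
  rewrite -sqrtr_sqr ler_wsqrtr // /sumsq (bigD1 i) //= lerDl.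
  by apply: sumr_ge0 => j _; rewrite sqr_ge0.
by rewrite -(ler_pXn2r (_ : 0 < 2)%N) ?nnegrE ?sqrtr_ge0 // sqr_sqrtr // sumsq_ge0.
Qed.

Lemma sumsq_le_sqr_norm (v : V) : sumsq v <= n%:R * `|v| ^+ 2.
Proof.
apply: (@le_trans _ _ (\sum_(i < n) `|v| ^+ 2)).
  apply: ler_sum => i _; rewrite -real_normK ?num_real //.
  by rewrite lerXn2r ?nnegrE ?normr_ge0 ?coord_le_norm.
by rewrite sumr_const card_ord mulr_natl.
Qed.

Lemma ltr_norm_sumsq (v : V) (e : R) : 0 <= e -> sumsq v < e ^+ 2 -> `|v| < e.
Proof.
move=> e0 ve; rewrite -(ltr_pXn2r (_ : 0 < 2)%N) ?nnegrE ?normr_ge0 //.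
exact: le_lt_trans (sqr_norm_le_sumsq v) ve.
Qed.

Lemma is_derive_sumsq {d : R -> V} {t : R} : derivable d t 1 ->
  is_derive t 1 (sumsq \o d) (\sum_(i < n) 2 * d t 0 i * derive1 d t 0 i).
Proof.
move=> dd.
have dcoord i : is_derive t 1 (fun x => d x 0 i) (derive1 d t 0 i).
  apply: DeriveDef; first exact: ((derivable_mxP d t 1).1 dd).
  by rewrite derive1E (derive_mx dd) mxE.
have dsq i : is_derive t 1 (fun x => d x 0 i ^+ 2) (2 * d t 0 i * derive1 d t 0 i).
  apply: (is_derive_eq (is_deriveX 2 (dcoord i))).
  by rewrite expr1 /GRing.scale /=; ring.
have := is_derive_sum dsq; rewrite fct_sumE; exact.
Qed.

Lemma derive_sumsq_le (d : R -> V) (t L e : R) : derivable d t 1 ->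
  0 <= L -> 0 <= e -> `|d t| <= 1 -> `|derive1 d t| <= L * `|d t| + e ->
  derive1 (sumsq \o d) t <= (2 * n%:R * L + 1) * sumsq (d t) + 2 * n%:R * e.
Proof.
move=> dd L0 e0 d1 d'le.
rewrite (derive1_val (is_derive_sumsq dd)).
set a := `|d t|; set S := sumsq (d t).
have a0 : 0 <= a := normr_ge0 _.
have : \sum_(i < n) 2 * d t 0 i * derive1 d t 0 i <= \sum_(i < n) 2 * (a * (L * a + e)).
  apply: ler_sum => i _; rewrite -mulrA ler_pM2l // (le_trans (ler_norm _)) // normrM.
  by apply: ler_pM => //; [exact: coord_le_norm | exact: le_trans (coord_le_norm _ _) d'le].
rewrite sumr_const card_ord -mulr_natl => /le_trans; apply.
have aS : a ^+ 2 <= S := sqr_norm_le_sumsq (d t).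
have S0 : 0 <= S := sumsq_ge0 (d t).
have n0 : (0 : R) <= n%:R := ler0n _ _.
have h1 : n%:R * (L * a ^+ 2) <= n%:R * (L * S) by rewrite ler_wpM2l // ler_wpM2l.
have h2 : n%:R * (e * a) <= n%:R * e by rewrite ler_wpM2l // ler_piMr.
rewrite expr2 in h1; nra.
Qed.

Lemma sumsq_sub_growth (u v : R -> V) (s L e k : R) :
  0 <= s -> 0 <= L -> 0 <= e -> k <= 1 ->
  (forall t, derivable u t 1) -> (forall t, derivable v t 1) ->
  (forall t, 0 <= t <= s -> `|u t - v t| <= 1 ->
     `|derive1 u t - derive1 v t| <= L * `|u t - v t| + e) ->
  (sumsq (u 0 - v 0) + 2 * n%:R * e) * expR ((2 * n%:R * L + 1) * s) < k ->
  sumsq (u s - v s) < k.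
Proof.
move=> s0 L0 e0 k1 du dv hd.
(* The extra 1 keeps the Gronwall rate M positive when n * L = 0. *)
set M := 2 * n%:R * L + 1; set c := 2 * n%:R * e => hk.
pose d t := u t - v t; pose E t := sumsq (d t).
have dd t : derivable d t 1 by exact: derivableB.
have dE t : derivable E t 1 by case: (is_derive_sumsq (dd t)).
have d'E t : derive1 d t = derive1 u t - derive1 v t by rewrite !derive1E deriveB.
have M1 : 1 <= M by rewrite lerDr !mulr_ge0.
have c0 : 0 <= c by rewrite !mulr_ge0.
have cM : c / M <= c by rewrite ler_pdivrMr; [apply: ler_peMr|lra].
have cM0 : 0 <= c / M by rewrite divr_ge0 //; lra.
have E0 : 0 <= E 0 := sumsq_ge0 (d 0).
have {}hk : (E 0 + c) * expR (M * s) < k := hk.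
have X1 : 1 <= expR (M * s) by rewrite -expR0 ler_expR mulr_ge0 //; lra.
(* The derivative bound only holds while |u - v| <= 1; the barrier argument
   shows that E, hence |u - v|, stays below k <= 1 on [0, s]. *)
apply: (continuous_barrier E s k _ _ _ s); last by rewrite s0 lexx.
- by move=> t; apply/differentiable_continuous/derivable1_diffP.
- have : E 0 + c <= (E 0 + c) * expR (M * s) by apply: ler_peMr => //; lra.
  lra.
move=> t /andP[t0 ts] Ek.
have d1 x : 0 <= x <= t -> `|d x| <= 1.
  move=> /Ek Exk; rewrite -(expr_le1 (_ : 0 < 2)%N) ?normr_ge0 //.
  exact: le_trans (sqr_norm_le_sumsq _) (le_trans Exk k1).
have : E t + c / M <= (E 0 + c / M) * expR (M * t).
  rewrite -[t in M * t]subr0; apply: gronwall => //; first lra.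
  move=> x /[dup] /d1 dx1 /andP[x0 xt].
  apply: derive_sumsq_le => //; rewrite d'E; apply: hd dx1.
  by rewrite x0 (le_trans xt ts).
have : (E 0 + c / M) * expR (M * t) <= (E 0 + c) * expR (M * s).
  by apply: ler_pM; rewrite ?expR_ge0 ?ler_expR ?ler_wpM2l //; lra.
lra.
Qed.

Lemma sumsq_sub_growth_abs (u v : R -> V) (s L e k : R) :
  0 <= L -> 0 <= e -> k <= 1 ->
  (forall t, derivable u t 1) -> (forall t, derivable v t 1) ->
  (forall t, `|t| <= `|s| -> `|u t - v t| <= 1 ->
     `|derive1 u t - derive1 v t| <= L * `|u t - v t| + e) ->
  (sumsq (u 0 - v 0) + 2 * n%:R * e) * expR ((2 * n%:R * L + 1) * `|s|) < k ->
  sumsq (u s - v s) < k.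
Proof.
move=> L0 e0 k1 du dv hd.
have [s0|s0] := leP 0 s.
  rewrite (ger0_norm s0) => hk.
  apply: (sumsq_sub_growth u v s L e k s0 L0 e0 k1 du dv _ hk) => t /andP[t0 ts].
  by apply: hd; rewrite !ger0_norm.
rewrite (ltr0_norm s0) => hk.
have dN (w : R -> V) t : derivable w (- t) 1 ->
    is_derive t 1 (w \o -%R) (- derive1 w (- t)).
  by move=> dw; have := is_derive1_comp_real (is_deriveNid t 1) dw; rewrite scaleN1r.
have s0' : 0 <= - s by rewrite oppr_ge0 ltW.
have := sumsq_sub_growth (u \o -%R) (v \o -%R) (- s) L e k s0' L0 e0 k1.
rewrite /comp !opprK oppr0; apply.
- by move=> t; case: (dN u t (du _)).
- by move=> t; case: (dN v t (dv _)).
- move=> t /andP[t0 ts] h.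
  rewrite (derive1_val (dN u t (du _))) (derive1_val (dN v t (dv _))).
  rewrite -opprD normrN.
  by apply: hd h; rewrite normrN (ltr0_norm s0) (ger0_norm t0).
- exact: hk.
Qed.

End sum_of_squares.

Section local_lipschitz.
Context {R : realType} {n : nat}.
Local Notation V := 'rV[R]_n.

Lemma continuous_compact_bounded {T : topologicalType} {W : normedModType R}
    {g : T -> W} {A : set T} :
  continuous g -> compact A -> exists C, forall x, A x -> `|g x| <= C.
Proof.
move=> gc Ac.
have [M [_ HM]] := compact_bounded (continuous_compact (continuous_subspaceT gc) Ac).
by exists (M + 1) => x Ax; apply: (HM (M + 1)); [lra | exists x].
Qed.

Definition box (r : R) : set (V * R) :=
  [set v : V | forall i, `[- r, r]%classic (v ord0 i)] `*` `[- r, r]%classic.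

Lemma box_compact r : compact (box r).
Proof.
apply: compact_setX; last exact: segment_compact.
exact: (rV_compact (fun=> @segment_compact R (- r) r)).
Qed.

Lemma box_norm_le r (z : V * R) : `|z| <= r -> box r z.
Proof.
rewrite prod_normE ge_max => /andP[z1 z2].
split=> [i|] /=; rewrite in_itv /= -ler_norml //.
exact: le_trans (coord_le_norm _ _) z1.
Qed.

Lemma rVR_basis_sum (w : V * R) :
  w = \sum_(j < n) w.1 0 j *: ((delta_mx 0 j : V), 0) + w.2 *: (0, 1).
Proof.
case: w => w1 w2; apply/eqP; rewrite xpair_eqE; apply/andP; split; apply/eqP.
  rewrite (big_morph fst (id1 := 0) (op1 := +%R)) //= scaler0 addr0.
  by rewrite {1}(row_sum_delta w1).
rewrite (big_morph snd (id1 := 0) (op1 := +%R)) //= big1 ?add0r ?[_%:A]mulr1 //.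
by move=> j _; rewrite scaler0.
Qed.

Lemma norm_convex_le (U : normedModType R) (a b : U) (r t : R) :
  `|a| <= r -> `|b| <= r -> 0 <= t <= 1 -> `|b + t *: (a - b)| <= r.
Proof.
move=> ar br /andP[t0 t1].
have -> : b + t *: (a - b) = (1 - t) *: b + t *: a.
  by rewrite scalerBr scalerBl scale1r addrCA addrC -addrA [- _ + _]addrC.
apply: le_trans (ler_normD _ _) _; rewrite !normrZ !ger0_norm ?subr_ge0 //.
have : (1 - t) * `|b| <= (1 - t) * r by rewrite ler_wpM2l // subr_ge0.
have : t * `|a| <= t * r by rewrite ler_wpM2l.
lra.
Qed.

Variable f : V * R -> V.
Hypothesis f_C1 : C1_field f.

Lemma diff_bounded r :
  exists K, 0 <= K /\ forall z w, box r z -> `|'d f z w| <= K * `|w|.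
Proof.
(* Expand w in the standard basis: each directional derivative is continuous,
   hence bounded on the compact box. *)
have [df dfc] := f_C1.
have [C HC] := boolp.choice (fun j : 'I_n =>
  continuous_compact_bounded (dfc ((delta_mx 0 j : V), 0)) (box_compact r)).
have [C' HC'] := continuous_compact_bounded (dfc (0, 1)) (box_compact r).
exists (\sum_j `|C j| + `|C'|); split; first by rewrite addr_ge0 ?sumr_ge0.
move=> z w zr.
have w1 : `|w.1| <= `|w| by rewrite prod_normE le_max lexx.
have w2 : `|w.2| <= `|w| by rewrite prod_normE le_max lexx orbT.
rewrite {1}(rVR_basis_sum w) linearD linear_sum /= linearZ /= mulrDl.
apply: le_trans (ler_normD _ _) _; apply: lerD.
  apply: le_trans (ler_norm_sum _ _ _) _; rewrite mulr_suml.
  apply: ler_sum => j _; rewrite linearZ normrZ -deriveE // mulrC.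
  apply: ler_pM => //; last exact: le_trans (coord_le_norm _ _) w1.
  exact: le_trans (HC j z zr) (ler_norm _).
rewrite normrZ -deriveE // mulrC.
by apply: ler_pM => //; exact: le_trans (HC' z zr) (ler_norm _).
Qed.

Lemma local_lipschitz r : exists K, 0 <= K /\
  forall z1 z2, `|z1| <= r -> `|z2| <= r -> `|f z1 - f z2| <= K * `|z1 - z2|.
Proof.
have [K [K0 HK]] := diff_bounded r.
exists K; split => // z1 z2 z1r z2r.
apply: rV_norm_le => [|i]; first by rewrite mulr_ge0.
pose h (t : R) : R := f (z2 + t *: (z1 - z2)) 0 i.
have dh (t : R) : is_derive t (1 : R) h ('d f (z2 + t *: (z1 - z2)) (z1 - z2) 0 i).
  have [dl dlE] := is_derive_line f z2 (z1 - z2) t (f_C1.1 _).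
  apply: DeriveDef; first exact: ((derivable_mxP _ t 1).1 dl).
  by rewrite -dlE (derive_mx dl) mxE.
have hd x : derivable h x 1 by case: (dh x).
have [c c01 hc] := MVT_segment ler01 (fun x _ => dh x)
  (derivable_within_continuous (fun x _ => hd x)).
have h1 : h 1 = f z1 0 i by rewrite /h scale1r addrC subrK.
have h0 : h 0 = f z2 0 i by rewrite /h scale0r addr0.
rewrite !mxE -h1 -h0 hc subr0 mulr1.
apply: le_trans (coord_le_norm _ _) _.
apply/HK/box_norm_le.
by apply: norm_convex_le; rewrite -?in_itv.
Qed.

Lemma lipschitz_pair_le {r K : R} {x y : V} {a b : R} : 0 <= K ->
  (forall z1 z2, `|z1| <= r -> `|z2| <= r -> `|f z1 - f z2| <= K * `|z1 - z2|) ->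
  `|x| <= r -> `|a| <= r -> `|y| <= r -> `|b| <= r ->
  `|f (x, a) - f (y, b)| <= K * `|x - y| + K * `|a - b|.
Proof.
move=> K0 HK xr ar yr br.
have pr (p : V) (q : R) : `|p| <= r -> `|q| <= r -> `|(p, q)| <= r.
  by move=> pr qr; rewrite prod_normE ge_max pr qr.
apply: le_trans (HK _ _ (pr _ _ xr ar) (pr _ _ yr br)) _.
rewrite -mulrDr ler_wpM2l // prod_normE ge_max /=.
by rewrite lerDl lerDr !normr_ge0.
Qed.

End local_lipschitz.

Section continuous_dependence.
Context {R : realType} {n : nat}.
Local Notation V := 'rV[R]_n.

Lemma continuous_bounded_segment {W : normedModType R} (p : R -> W) (S : R) :
  continuous p -> exists C, 0 <= C /\ forall t, `|t| <= S -> `|p t| <= C.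
Proof.
move=> pc; have [C HC] := continuous_compact_bounded pc (@segment_compact R (- S) S).
exists `|C|; split => // t tS; apply: le_trans (HC t _) (ler_norm _).
by rewrite /= in_itv /= -ler_norml.
Qed.

Variable f : V * R -> V.
Hypothesis f_C1 : C1_field f.

Lemma continuous_dependence (lam : R) (v : R -> V) (s eps : R) : 0 < eps ->
  is_solution (fun _ x => f (x, lam)) v ->
  exists2 del, 0 < del & exists2 eta, 0 < eta &
   forall (u : R -> V) (Lu : R -> R),
    is_solution (fun t x => f (x, Lu t)) u ->
    (forall t, `|t| <= `|s| -> `|Lu t - lam| < eta) ->
    `|u 0 - v 0| < del -> `|u s - v s| < eps.
Proof.
move=> eps0 hv.
have vc : continuous v.
  by move=> t; apply/differentiable_continuous/derivable1_diffP; case: (hv t).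
have [C [C0 HC]] := continuous_bounded_segment v `|s| vc.
have [K [K0 HK]] := local_lipschitz f f_C1 (C + `|lam| + 1).
pose X := expR ((2 * n%:R * K + 1) * `|s|).
pose N := 2 * n%:R * K + n%:R + 1.
pose k := Num.min 1 (eps ^+ 2).
pose d := Num.min 1 (k / (X * N)).
have n0 : (0 : R) <= n%:R := ler0n _ _.
have N0 : 0 < N by rewrite /N; have := mulr_ge0 (mulr_ge0 (ler0n R 2) n0) K0; lra.
have k0 : 0 < k by rewrite lt_min ltr01 exprn_gt0.
have k1 : k <= 1 by rewrite ge_min lexx.
have keps : k <= eps ^+ 2 by rewrite ge_min lexx orbT.
have d0 : 0 < d by rewrite lt_min ltr01 divr_gt0 ?mulr_gt0 ?expR_gt0.
have d1 : d <= 1 by rewrite ge_min lexx.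
have dXN : d * X * N <= k.
  by rewrite -mulrA -ler_pdivlMr ?mulr_gt0 ?expR_gt0 // ge_min lexx orbT.
(* With del = eta = d, the Gronwall bound below is at most (N - 1) d X < k. *)
exists d => //; exists d => // u Lu hu hLu hu0.
apply: ltr_norm_sumsq; first exact: ltW.
apply: (lt_le_trans _ keps).
apply: (sumsq_sub_growth_abs u v s K (K * d) k K0 _ k1
  (fun t => (hu t).1) (fun t => (hv t).1)); first by rewrite mulr_ge0 // ltW.
- move=> t ts dt1; rewrite (hu t).2 (hv t).2.
  have := HC t ts; have := hLu t ts; have := normr_ge0 lam; move=> lam0 Lt vt.
  have ut : `|u t| <= `|u t - v t| + `|v t| by rewrite -{1}[u t](subrK (v t)) ler_normD.
  have Lt' : `|Lu t| <= `|Lu t - lam| + `|lam|.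
    by rewrite -{1}[Lu t](subrK lam) ler_normD.
  apply: le_trans (lipschitz_pair_le f K0 HK _ _ _ _) _; try lra.
  by rewrite lerD2l ler_wpM2l // ltW.
- have a0 := normr_ge0 (u 0 - v 0).
  have hs0 : sumsq (u 0 - v 0) <= n%:R * d.
    by apply: le_trans (sumsq_le_sqr_norm _) _; rewrite ler_wpM2l //; nra.
  have dX0 : 0 < d * X by rewrite mulr_gt0 ?expR_gt0.
  apply: (@le_lt_trans _ _ ((N - 1) * d * X)); last by nra.
  by rewrite ler_pM2r ?expR_gt0 // /N; lra.
Qed.

End continuous_dependence.

Section limit_sets.
Context {R : realType} {n : nat}.
Local Notation V := 'rV[R]_n.

Definition upper_limit (sg : R) (A : R -> set V) : set V :=
  \bigcap_(tau in [set tau : R | 0 < tau])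
     closure (\bigcup_(t in [set t : R | tau <= sg * t]) A t).

Lemma upper_forward_limitE (A : R -> set V) :
  upper_forward_limit A = upper_limit 1 A.
Proof.
rewrite /upper_forward_limit /upper_limit; congr bigcap; apply/funext => tau.
by congr (closure (bigcup _ _)); apply/funext => t /=; rewrite mul1r.
Qed.

Lemma upper_backward_limitE (A : R -> set V) :
  upper_backward_limit A = upper_limit (-1) A.
Proof.
rewrite /upper_backward_limit /upper_limit; congr bigcap; apply/funext => tau.
by congr (closure (bigcup _ _)); apply/funext => t /=; rewrite mulN1r lerNr.
Qed.

Lemma is_solution_shift (g : R -> V -> V) (x : R -> V) (a : R) :
  is_solution g x -> is_solution (fun t => g (t + a)) (fun t => x (t + a)).
Proof.
move=> hx t; have [dx x'] := hx (t + a).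
have [d d'] := is_derive1_comp_real (is_derive_shift t 1 a) dx.
by split => //; rewrite derive1E d' scale1r x'.
Qed.

Variable f : V * R -> V.
Hypothesis f_C1 : C1_field f.

Lemma flow_cancel (lam : R) (phi : R -> V -> V) : autonomous_flow f lam phi ->
  forall s x, phi s (phi (- s) x) = x.
Proof.
move=> hphi s x.
have hv := is_solution_shift _ _ (- s) (hphi x).2.
rewrite -[X in _ = X](hphi x).1 -(addrN s).
apply/eqP; rewrite -subr_eq0 -normr_le0; apply/ler_addgt0Pr => e e0.
rewrite add0r ltW //.
have [del del0 [eta eta0 close]] := continuous_dependence f f_C1 lam _ s e e0 hv.
apply: (close (fun t => phi t (phi (- s) x)) (fun=> lam)) => [|t _|].
- exact: (hphi _).2.
- by rewrite subrr normr0.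
- by rewrite add0r (hphi _).1 subrr normr0.
Qed.

Section parameter_limit.
Variables (Lam : R -> R) (r lam sg : R) (Phi : R -> R -> V -> V) (phi : R -> V -> V).
Hypotheses (sg1 : `|sg| = 1) (hPhi : solution_cocycle f Lam r Phi)
  (hphi : autonomous_flow f lam phi)
  (hLam : forall e, 0 < e -> exists T, forall t, T <= sg * t -> `|Lam (r * t) - lam| < e).

Lemma cocycle_near_flow x s e : 0 < e -> exists2 del, 0 < del & exists T,
  forall t0 y, T <= sg * t0 -> `|y - x| < del -> `|Phi (t0 + s) t0 y - phi s x| < e.
Proof.
move=> e0.
have [del del0 [eta eta0 close]] :=
  continuous_dependence f f_C1 lam _ s e e0 (hphi x).2.
have [T HT] := hLam eta eta0.
exists del => //; exists (T + `|s|) => t0 y hT hy; rewrite [t0 + s]addrC.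
apply: (close (fun t => Phi (t + t0) t0 y) (fun t => Lam (r * (t + t0)))).
- exact: (is_solution_shift _ _ t0 (hPhi t0 y).2).
- move=> t ts; apply: HT; rewrite mulrDr.
  have /ler_normlP[] : `|sg * t| <= `|s| by rewrite normrM sg1 mul1r.
  lra.
- by rewrite add0r (hPhi t0 y).1 (hphi x).1.
Qed.

Variable A : R -> set V.
Hypothesis hinv : invariant_set Phi A.

Lemma upper_limit_flow_closed s x : upper_limit sg A x -> upper_limit sg A (phi s x).
Proof.
move=> Ax tau /= tau0 N /nbhs_ballP[eps eps0 epsN].
have [del del0 [T HT]] := cocycle_near_flow x s eps eps0.
set M := Num.max (tau + `|s|) T.
have M1 : tau + `|s| <= M by rewrite le_max lexx.
have M2 : T <= M by rewrite le_max lexx orbT.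
have M0 : 0 < M + 1 by have := normr_ge0 s; lra.
have [y [[t0 /= t0M Ay] xy]] := Ax (M + 1) M0 _ (nbhsx_ballx x del del0).
exists (Phi (t0 + s) t0 y); split.
  exists (t0 + s); last by rewrite -(hinv (t0 + s) t0); exists y.
  have /ler_normlP[] : `|sg * s| <= `|s| by rewrite normrM sg1 mul1r.
  rewrite /= mulrDr; lra.
apply: epsN; rewrite -ball_normE /= distrC; apply: HT; first lra.
by move: xy; rewrite -ball_normE /= distrC.
Qed.

Lemma upper_limit_flow_invariant s : phi s @` upper_limit sg A = upper_limit sg A.
Proof.
apply/seteqP; split; first by move=> _ [x Ax <-]; exact: upper_limit_flow_closed.
move=> x Ax; exists (phi (- s) x); first exact: upper_limit_flow_closed.
exact: flow_cancel hphi s x.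
Qed.

End parameter_limit.

End limit_sets.

Theorem lemma2p1 (R : realType) (n : nat)
    (f : 'rV[R]_n * R -> 'rV[R]_n) (lm lp : R) (Lam : R -> R) (r : R)
    (Phi : R -> R -> 'rV[R]_n -> 'rV[R]_n)
    (phim phip : R -> 'rV[R]_n -> 'rV[R]_n)
    (A : R -> set 'rV[R]_n) :
  C1_field f -> lm < lp -> parameter_shift Lam lm lp -> 0 < r ->
  solution_cocycle f Lam r Phi ->
  autonomous_flow f lm phim -> autonomous_flow f lp phip ->
  nonautonomous_set A -> invariant_set Phi A ->
  (bounded_rv (upper_backward_limit A) ->
     forall s, phim s @` upper_backward_limit A = upper_backward_limit A) /\
  (bounded_rv (upper_forward_limit A) ->
     forall s, phip s @` upper_forward_limit A = upper_forward_limit A).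
Proof.
move=> f_C1 _ [_ [_ [Lam_lm [Lam_lp _]]]] r0 hPhi hphim hphip _ hinv.
split=> _ s.
- rewrite upper_backward_limitE.
  apply: (upper_limit_flow_invariant f f_C1 _ _ _ _ _ _ _ hPhi hphim _ _ hinv).
  + by rewrite normrN normr1.
  apply: cvg_scaled_eventually r0 _ _; first by rewrite normrN normr1.
  have -> : (fun t => Lam (-1 * t)) = Lam \o -%R.
    by apply/funext => t /=; rewrite mulN1r.
  exact/cvgNy_compNP.
- rewrite upper_forward_limitE.
  apply: (upper_limit_flow_invariant f f_C1 _ _ _ _ _ _ _ hPhi hphip _ _ hinv).
  + by rewrite normr1.
  apply: cvg_scaled_eventually r0 _ _; first by rewrite normr1.
  have -> : (fun t => Lam (1 * t)) = Lam by apply/funext => t; rewrite mul1r.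
  exact: Lam_lp.
Qed.
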